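(* Fix $\eta\ge 2$, $\kappa>0$, transmit power $P'>0$ and $N>0$. For each $T\ge 3$ consider the $T$-node Gaussian multiple relay channel in which the nodes $1,\dots,T$ lie on a line with consecutive spacing $1$ (so $d_{it}=|i-t|$), every transmitting node has power constraint $E[X_i^2]\le P'$, and the noise variances satisfy $N_t\le N$. Then there is a constant $c>0$ depending only on $\eta,\kappa,P',N$ (not on $T$) such that, for every $T$, the two-hop myopic achievable rate of Theorem 1 (with jointly Gaussian inputs, $X_t$ a linear combination of independent Gaussian $U_t,U_{t+1}$ with a power split) is at least $c$; in particular two-hop myopic coding rates stay bounded away from zero as $T\to\infty$.
   Context: The Gaussian multiple relay channel is $Y_t=\sum_{i=1,\,i\ne t}^{T-1}\sqrt{\kappa d_{it}^{-\eta}}\,X_i+Z_t$ for $t=2,\dots,T$, where $Z_t\sim\mathcal N(0,N_t)$ are independent of the inputs and of each other, $d_{it}$ is the distance between nodes $i$ and $t$, and $\eta$ is the path loss exponent. The two-hop achievable rate is $\min_{t\in\{2,\dots,T\}} I(U_{t-2},U_{t-1};Y_t\mid U_t,U_{t+1})$ with $U_0=U_T=U_{T+1}=0$, where $U_1,\dots,U_{T-1}$ are independent, $X_t$ is a function of $(U_t,U_{t+1})$ for $t\le T-2$ and $X_{T-1}$ a function of $U_{T-1}$; signals of nodes not in $\{U_{t-2},\dots,U_{t+1}\}$ are treated as noise at node $t$. *)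

From mathcomp Require Import all_boot all_order all_algebra.
From mathcomp Require Import reals exp.
Set Implicit Arguments. Unset Strict Implicit. Unset Printing Implicit Defensive.
Import Order.TTheory GRing.Theory Num.Theory.
Local Open Scope ring_scope.

Section GaussRelay.
Variable R : realType.

Definition node_dist (i t : nat) : nat := ((i - t) + (t - i))%N.

Definition gain (kappa eta : R) (i t : nat) : R :=
  Num.sqrt (kappa * powR (node_dist i t)%:R (- eta)).

(* Inputs: U_1, ..., U_{T-1} independent standard Gaussians (U_0 = U_T = U_{T+1} = 0).
   X_i = a i * U_i + b i * U_{i+1} for 1 <= i <= T-2, and X_{T-1} = a (T-1) * U_{T-1}.
   xcoef T a b i j = coefficient of U_j in X_i. *)
Definition xcoef (T : nat) (a b : nat -> R) (i j : nat) : R :=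
  if j == i then a i
  else if (j == i.+1) && (i <= T - 2)%N then b i else 0.

(* Coefficient of U_j in Y_t = sum_{1 <= i <= T-1, i <> t} gain i t * X_i + Z_t. *)
Definition ycoef (kappa eta : R) (T : nat) (a b : nat -> R) (t j : nat) : R :=
  \sum_(1 <= i < T | i != t) gain kappa eta i t * xcoef T a b i j.

(* Conditional mutual information I(U_A ; Y | U_B) (in nats) for
   Y = sum_{1<=j<T} c j U_j + Z, with U_j iid N(0,1) and Z ~ N(0, Nz) independent:
   (1/2) ln( Var(Y | U_B) / Var(Y | U_A, U_B) ). *)
Definition gauss_cmi (T : nat) (c : nat -> R) (A B : pred nat) (Nz : R) : R :=
  (1 / 2) * ln ((\sum_(1 <= j < T | ~~ B j) c j ^+ 2 + Nz) /
                (\sum_(1 <= j < T | ~~ A j && ~~ B j) c j ^+ 2 + Nz)).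

(* Rate constraint at node t:  I(U_{t-2}, U_{t-1} ; Y_t | U_t, U_{t+1}). *)
Definition hop_rate (kappa eta : R) (T : nat) (a b Nt : nat -> R) (t : nat) : R :=
  gauss_cmi T (ycoef kappa eta T a b t)
    (fun j => (j == t - 2)%N || (j == t - 1)%N)
    (fun j => (j == t)%N || (j == t.+1)%N)
    (Nt t).

End GaussRelay.

(* Every node spends its whole power on its own fresh message (b = 0).  Node t
   then receives U_(t-1) from distance 1 with power kappa P', while every
   undecoded message comes from distance d >= 2, one on each side per d, with
   power kappa P' d^(-eta) <= kappa P' (1/(d-1) - 1/d).  These telescope, so the
   interference is at most 2 kappa P' whatever T is, and every hop rate is at
   least (1/2) ln (1 + kappa P' / (2 kappa P' + N)). *)

From mathcomp Require Import all_boot all_order all_algebra.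
From mathcomp Require Import reals exp ring lra zify.
Set Implicit Arguments. Unset Strict Implicit. Unset Printing Implicit Defensive.
Import Order.TTheory GRing.Theory Num.Theory.
Local Open Scope ring_scope.

Lemma node_dist_subl (d t : nat) : (d <= t)%N -> node_dist (t - d) t = d.
Proof. by rewrite /node_dist; lia. Qed.

Lemma node_dist_addl (d t : nat) : node_dist (d + t) t = d.
Proof. by rewrite /node_dist; lia. Qed.

Section RelayRateBounds.
Variable R : realType.

Lemma powRN_le_telescope (eta d : R) : 2 <= eta -> 2 <= d ->
  powR d (- eta) <= (d - 1)^-1 - d^-1.
Proof.
move=> eta_ge2 d_ge2.
have -> : (d - 1)^-1 - d^-1 = ((d - 1) * d)^-1.
  by field; apply/andP; split; apply/eqP; lra.
apply: (@le_trans _ _ (powR d (- 2%:R))); first by apply: ler_powR; lra.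
rewrite powR_invn; last lra.
rewrite lef_pV2 ?posrE ?exprn_gt0 ?mulr_gt0; lra.
Qed.

Lemma sum_powRN_le1 (eta : R) (n : nat) : 2 <= eta ->
  \sum_(2 <= d < n) powR d%:R (- eta) <= 1.
Proof.
move=> eta_ge2.
suff tail n' : \sum_(2 <= d < n'.+2) powR d%:R (- eta) <= 1 - (n'.+1)%:R^-1.
  case: n => [|[|n]]; try by rewrite big_geq ?ler01.
  by apply: le_trans (tail n) _; rewrite lerBlDr lerDl invr_ge0.
elim: n' => [|n' IH]; first by rewrite big_geq // invr1 subrr.
rewrite big_nat_recr //=.
have d_ge2 : 2 <= (n'.+2)%:R :> R by rewrite ler_nat.
have := powRN_le_telescope eta_ge2 d_ge2.
have -> : (n'.+2)%:R - 1 = (n'.+1)%:R :> R by rewrite -natr1 addrK.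
move=> step; apply: le_trans (lerD IH step) _.
by rewrite addrA subrK.
Qed.

Lemma sum_far_node_dist_le (g : nat -> R) (M : R) (t T : nat) :
  (1 <= t <= T)%N -> (forall n, \sum_(2 <= d < n) g d <= M) ->
  \sum_(1 <= j < T | (2 <= node_dist j t)%N) g (node_dist j t) <= M + M.
Proof.
move=> /andP[t_ge1 t_leT] gM.
have far_range m n : (m <= 2)%N ->
    \sum_(m <= d < n | (2 <= d)%N) g d = \sum_(2 <= d < n) g d.
  by move=> m_le2; rewrite !big_geq_mkord; apply: eq_bigl => d; lia.
have left_sum : \sum_(1 <= j < t | (2 <= node_dist j t)%N) g (node_dist j t) =
    \sum_(2 <= d < t) g d.
  rewrite big_nat_rev /= add1n -(far_range 1%N) //.
  apply: congr_big_nat => // d; [move=> /andP[_ d_lt_t] | move=> /and3P[_ _ d_lt_t]];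
    by rewrite subSS node_dist_subl // ltnW.
have right_sum : \sum_(t <= j < T | (2 <= node_dist j t)%N) g (node_dist j t) =
    \sum_(2 <= d < T - t) g d.
  rewrite -{1}[t]add0n big_addn -(far_range 0%N) //.
  by apply: congr_big_nat => // d; rewrite node_dist_addl.
by rewrite (big_cat_nat t_ge1 t_leT) /= left_sum right_sum lerD.
Qed.

Lemma ln1p_div_le_ln_div (K M D S : R) :
  0 <= K -> 0 < D -> D <= M -> D + K <= S -> ln (1 + K / M) <= ln (S / D).
Proof.
move=> K_ge0 D_gt0 D_leM DK_leS.
have M_gt0 : 0 < M by lra.
have KM_ge0 : 0 <= K / M by rewrite divr_ge0 // ltW.
rewrite ler_ln ?posrE ?divr_gt0 //; try lra.
rewrite ler_pdivlMr //.
have : K / M * D <= K by rewrite mulrAC ler_pdivrMr // ler_wpM2l.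
lra.
Qed.

Lemma gauss_cmi_ge (T : nat) (c : nat -> R) (A B : pred nat) (Nz K M : R) (j0 : nat) :
  0 < Nz -> 0 <= K -> (1 <= j0 < T)%N -> A j0 -> ~~ B j0 -> K <= c j0 ^+ 2 ->
  \sum_(1 <= j < T | ~~ A j && ~~ B j) c j ^+ 2 + Nz <= M ->
  (1 / 2) * ln (1 + K / M) <= gauss_cmi T c A B Nz.
Proof.
move=> Nz_gt0 K_ge0 j0_range Aj0 Bj0 K_le_cj0 resid_leM.
set resid := \sum_(1 <= j < T | ~~ A j && ~~ B j) c j ^+ 2.
have resid_ge0 : 0 <= resid by apply: sumr_ge0 => j _; exact: sqr_ge0.
have signal_ge : resid + K <= \sum_(1 <= j < T | ~~ B j) c j ^+ 2.
  rewrite (bigID A) /= addrC lerD //.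
    by under eq_bigl => j do rewrite andbC.
  rewrite big_mkcond (bigD1_seq j0) /= ?mem_index_iota ?iota_uniq // Bj0 Aj0 /=.
  apply: le_trans K_le_cj0 _; rewrite lerDl; apply: sumr_ge0 => j _.
  by case: ifP => _ //; exact: sqr_ge0.
rewrite /gauss_cmi -/resid ler_wpM2l //; first lra.
apply: ln1p_div_le_ln_div => //; lra.
Qed.

Section UniformPower.
Variables (kappa eta : R).
Hypotheses (kappa_ge0 : 0 <= kappa) (eta_ge2 : 2 <= eta).

Lemma gain_sqr (i t : nat) :
  gain kappa eta i t ^+ 2 = kappa * powR (node_dist i t)%:R (- eta).
Proof. by rewrite /gain sqr_sqrtr // mulr_ge0 // powR_ge0. Qed.

Lemma ycoef_uniform_sqr (P : R) (T t j : nat) :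
  0 <= P -> (1 <= j < T)%N -> j != t ->
  ycoef kappa eta T (fun=> Num.sqrt P) (fun=> 0) t j ^+ 2 =
  kappa * P * powR (node_dist j t)%:R (- eta).
Proof.
move=> P_ge0 j_range j_neq_t.
have -> : ycoef kappa eta T (fun=> Num.sqrt P) (fun=> 0) t j =
    gain kappa eta j t * Num.sqrt P.
  rewrite /ycoef big_mkcond (bigD1_seq j) /= ?mem_index_iota ?iota_uniq //.
  rewrite j_neq_t /xcoef eqxx big1_seq ?addr0 // => i /andP[i_neq_j _].
  by rewrite [j == i]eq_sym (negbTE i_neq_j) /= if_same mulr0 if_same.
by rewrite exprMn gain_sqr sqr_sqrtr // mulrAC.
Qed.

Lemma uniform_interference_le (P : R) (T t : nat) :
  0 <= P -> (2 <= t <= T)%N ->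
  \sum_(1 <= j < T | ~~ ((j == t - 2) || (j == t - 1))%N && ~~ ((j == t) || (j == t.+1))%N)
    ycoef kappa eta T (fun=> Num.sqrt P) (fun=> 0) t j ^+ 2 <= 2 * (kappa * P).
Proof.
move=> P_ge0 t_range.
have kP_ge0 : 0 <= kappa * P by rewrite mulr_ge0.
apply: (@le_trans _ _ (kappa * P *
    \sum_(1 <= j < T | (2 <= node_dist j t)%N) powR (node_dist j t)%:R (- eta))).
  rewrite mulr_sumr big_mkcond [X in _ <= X]big_mkcond /=.
  apply: ler_sum_nat => j j_range; case: ifPn => [far | _].
    have -> : (2 <= node_dist j t)%N by move: far; rewrite /node_dist; lia.
    by rewrite ycoef_uniform_sqr //; apply/negP => /eqP j_eq_t; move: far; lia.
  by case: ifP => _ //; rewrite mulr_ge0 // powR_ge0.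
rewrite mulrC ler_wpM2r //.
have t_range' : (1 <= t <= T)%N by lia.
have := sum_far_node_dist_le t_range' (fun n => sum_powRN_le1 n eta_ge2).
lra.
Qed.

End UniformPower.

End RelayRateBounds.

Theorem mainTheorem3 (R : realType) (eta kappa P' N : R) :
  2 <= eta -> 0 < kappa -> 0 < P' -> 0 < N ->
  exists c : R, 0 < c /\
    forall (T : nat), (3 <= T)%N ->
    forall Nt : nat -> R, (forall t, (2 <= t <= T)%N -> 0 < Nt t <= N) ->
    exists a b : nat -> R,
      (forall i, (1 <= i <= T - 2)%N -> a i ^+ 2 + b i ^+ 2 <= P') /\
      a (T - 1)%N ^+ 2 <= P' /\
      forall t, (2 <= t <= T)%N -> c <= hop_rate kappa eta T a b Nt t.
Proof.
move=> eta_ge2 kappa_gt0 P'_gt0 N_gt0.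
have K_gt0 : 0 < kappa * P' by rewrite mulr_gt0.
have SINR_gt0 : 0 < kappa * P' / (2 * (kappa * P') + N) by rewrite divr_gt0 //; lra.
exists ((1 / 2) * ln (1 + kappa * P' / (2 * (kappa * P') + N))); split.
  by rewrite mulr_gt0 ?ln_gt0 //; lra.
move=> T _ Nt Nt_range.
have sqrtP'2 : Num.sqrt P' ^+ 2 = P' by rewrite sqr_sqrtr // ltW.
exists (fun=> Num.sqrt P'), (fun=> 0); split; [|split].
- by move=> i _; rewrite sqrtP'2 expr0n addr0.
- by rewrite sqrtP'2.
move=> t t_range; have /andP[Nt_gt0 Nt_leN] := Nt_range t t_range.
rewrite /hop_rate; set c := ycoef kappa eta T _ _ t.
have prev_range : (1 <= t - 1 < T)%N by lia.
have prev_decoded : ((t - 1 == t - 2) || (t - 1 == t - 1))%N by rewrite eqxx orbT.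
have prev_unknown : ~~ ((t - 1 == t) || (t - 1 == t.+1))%N by apply/norP; split; apply/eqP; lia.
have signal : kappa * P' <= c (t - 1)%N ^+ 2.
  rewrite /c ycoef_uniform_sqr ?(ltW kappa_gt0) ?(ltW P'_gt0) //; last by apply/eqP; lia.
  by rewrite (_ : node_dist (t - 1) t = 1%N) ?powR1 ?mulr1 //; rewrite /node_dist; lia.
have := uniform_interference_le (ltW kappa_gt0) eta_ge2 (ltW P'_gt0) t_range.
rewrite -/c => interference.
apply: (gauss_cmi_ge Nt_gt0 (ltW K_gt0) prev_range prev_decoded prev_unknown signal).
lra.
Qed.
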